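(* Let $G\subseteq W(\mathsf D_n)$ be a subgroup satisfying both the (H1) condition and the minimality condition. Then the action of $G$ on the set of components of degenerate fibers $\{q_j^{\pm}: 1\le j\le n\}$ has at most three orbits.
   Context: Let $X\to\mathbb P^1$ be a standard conic bundle with $n$ degenerate geometric fibers $q_j^+\cup q_j^-$. $W(\mathsf D_n)$ is the group of signed permutations of the symbols $j^\pm\leftrightarrow q_j^\pm$ (generated by $\mathfrak S_n$ permuting indices and involutions $c_j$ exchanging $j^+,j^-$) having an even number of sign changes; it acts on $\mathrm{Pic}(\bar X)=\bigoplus_{i=-1}^n\mathbb Zl_i$ via $\Phi$: for $g=c_{j_1}\cdots c_{j_t}\tau$ ($t$ even), with $s(i)=-1$ if $i\in\{j_1,\dots,j_t\}$ else $1$, $\Phi(g)l_0=l_0$, $\Phi(g)l_{-1}=l_{-1}+\frac t2l_0-\sum_{s(i)=-1}l_i$, and for $v\ge1$, $u=\tau^{-1}(v)$: $\Phi(g)l_v=l_u$ if $s(u)=1$, $\Phi(g)l_v=l_0-l_u$ if $s(u)=-1$. $G$ satisfies (H1) if $\mathrm H^1(H,\mathrm{Pic}(\bar X))=0$ for all subgroups $H\subseteq G$. $G$ satisfies the minimality condition if it corresponds to a $k$-minimal conic bundle (no Galois-equivariant blow-down possible); for standard conic bundles this entails that for each $j$ the two components $q_j^+$ and $q_j^-$ lie in the same $G$-orbit. *)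

From HB Require Import structures.
From mathcomp Require Import all_boot all_order all_algebra all_fingroup.
Set Implicit Arguments. Unset Strict Implicit. Unset Printing Implicit Defensive.
Import GRing.Theory.
Local Open Scope ring_scope.

(* Symbols j^+ / j^- of the components q_j^+ / q_j^- : pairs (j, b) with
   j : 'I_n (the n degenerate fibers, indexed 0..n-1) and b = false for "+",
   b = true for "-". *)
Definition sym (n : nat) := ('I_n * bool)%type.

(* MathComp convention: (s * t) x = t (s x), i.e. products act left to right. *)

(* The set J of indices whose sign is changed by g = c_J tau (left-to-right):
   g(u^+) = tau(u)^{s(u)}. *)
Definition Jset n (g : {perm sym n}) : {set 'I_n} :=
  [set u | (g (u, false)).2].

(* W(D_n): signed permutations (commuting with the exchange j^+ <-> j^-)
   with an even number of sign changes. *)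
Definition WD n : {set {perm sym n}} :=
  [set g : {perm sym n} |
     [forall x : sym n, g (x.1, ~~ x.2) == ((g x).1, ~~ (g x).2)]
     && ~~ odd #|Jset g| ].

(* Pic(X-bar) = (+)_{i=-1}^n Z l_i, realised as column vectors 'cV[int]_(n+2);
   coordinate 0 <-> l_{-1}, coordinate 1 <-> l_0, coordinate j+2 <-> l_{j+1}. *)
Definition idx_m1 n : 'I_n.+2 := ord0.
Definition idx_0 n : 'I_n.+2 := lift ord0 ord0.
Definition idx_l n (j : 'I_n) : 'I_n.+2 := lift ord0 (lift ord0 j).

Definition bvec n (k : 'I_n.+2) : 'cV[int]_n.+2 :=
  \col_(i < n.+2) ((i == k)%:R : int).

(* Phi(g) l_c, following the formulas of the paper:
   Phi(g) l_0 = l_0,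
   Phi(g) l_{-1} = l_{-1} + (t/2) l_0 - sum_{s(i)=-1} l_i   (t = #|J|),
   Phi(g) l_v = l_u or l_0 - l_u  where u = tau^{-1}(v), according to s(u). *)
Definition Phi_img n (g : {perm sym n}) (c : 'I_n.+2) : 'cV[int]_n.+2 :=
  match unlift ord0 c with
  | None => bvec (idx_m1 n) + bvec (idx_0 n) *+ (#|Jset g| %/ 2)
            - \sum_(i in Jset g) bvec (idx_l i)
  | Some c' =>
    match unlift ord0 c' with
    | None => bvec (idx_0 n)
    | Some v =>
      let u := ((g^-1)%g (v, false)).1 in
      if u \in Jset g then bvec (idx_0 n) - bvec (idx_l u) else bvec (idx_l u)
    end
  end.

Definition Phi n (g : {perm sym n}) : 'M[int]_n.+2 :=
  \matrix_(i < n.+2, c < n.+2) Phi_img g c i ord0.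

Definition crossed_hom n (H : {set {perm sym n}}) (f : {perm sym n} -> 'cV[int]_n.+2) :=
  {in H &, forall g h, f (g * h)%g = f g + Phi g *m f h}.

Definition H1_trivial n (H : {set {perm sym n}}) : Prop :=
  forall f, crossed_hom H f ->
    exists m : 'cV[int]_n.+2, {in H, forall g, f g = Phi g *m m - m}.

Definition cond_H1 n (G : {group {perm sym n}}) : Prop :=
  forall H : {group {perm sym n}}, H \subset G -> H1_trivial H.

Definition cond_min n (G : {group {perm sym n}}) : Prop :=
  forall j : 'I_n, (j, true) \in orbit 'P G (j, false).

(* Let J_g be the set of fibers whose two components g exchanges; by minimality
   the orbits of G on components are orbits of fibers.  For a G-stable set S of
   fibers, the parity of #|S ∩ J_g| is a homomorphism G -> F_2.  If it vanishes
   on a subgroup H, then g |-> (#|S ∩ J_g|/2) l_0 - sum_{u in S ∩ J_g} l_u is a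
   crossed homomorphism on H.  Were it the coboundary of m, summing its
   l_u-coordinates modulo 2 over a set T stable under h in H shows that
   (m_{-1} - [T ⊆ S]) #|T ∩ J_h| is even; an h with #|T ∩ J_h| odd for some T
   inside S and one for some T outside S make m_{-1} both odd and even.
   Given four orbits O_1, ..., O_4: if some g exchanges an odd number of fibers
   in each of O_1, O_2, O_3, take H = <g>, S = O_1 ∪ O_2 and T = O_1, O_3.
   Otherwise linear algebra over F_2 makes the parity character of one of O_1,
   O_2, O_3, O_1 ∪ O_2 ∪ O_3 trivial on G; take H = G and T = {u} for a fiber
   u inside and one outside S, with h fixing the fiber u and exchanging its
   components, as minimality provides. *)

From mathcomp Require Import all_boot all_order all_algebra all_fingroup zify.
Set Implicit Arguments. Unset Strict Implicit. Unset Printing Implicit Defensive.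
Import GRing.Theory.

Lemma card_sum_mem (T : finType) (A : {pred T}) : #|A| = \sum_x (x \in A).
Proof. by rewrite -sum1_card big_mkcond; apply: eq_bigr => x _; case: (x \in A). Qed.

Lemma odd_setIU (T : finType) (A B J : {set T}) : [disjoint A & B] ->
  odd #|(A :|: B) :&: J| = odd #|A :&: J| (+) odd #|B :&: J|.
Proof.
move=> dAB; rewrite -oddD -cardsUI -setIUl setIACA setIid (disjoint_setI0 dAB) set0I.
by rewrite cards0 addn0.
Qed.

Lemma disjointsU (T : finType) (A B C : {set T}) :
  [disjoint A :|: B & C] = [disjoint A & C] && [disjoint B & C].
Proof. by rewrite -!setI_eq0 setIUl setU_eq0. Qed.

Lemma card_imset_gt3 (aT rT : finType) (f : aT -> rT) (A : {pred aT}) :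
  3 < #|f @: A| -> exists u1 u2 u3 u4, uniq [seq f u | u <- [:: u1; u2; u3; u4]].
Proof.
rewrite cardE; have := enum_uniq (f @: A); have := mem_enum (f @: A).
case: (enum _) => [|y1 [|y2 [|y3 [|y4 r]]]] // fA + _.
have /imsetP[u1 _ ->] : y1 \in f @: A by rewrite -fA !inE eqxx.
have /imsetP[u2 _ ->] : y2 \in f @: A by rewrite -fA !inE eqxx ?orbT.
have /imsetP[u3 _ ->] : y3 \in f @: A by rewrite -fA !inE eqxx ?orbT.
have /imsetP[u4 _ ->] : y4 \in f @: A by rewrite -fA !inE eqxx ?orbT.
by rewrite -[_ :: _]/([:: _; _; _; _] ++ r) cat_uniq => /andP[uniq4 _]; exists u1, u2, u3, u4.
Qed.

Section ParityMorphisms.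
Variables (gT : finGroupType) (G : {group gT}).

Definition parity_morph (c : gT -> bool) :=
  {in G &, {morph c : x y / (x * y)%g >-> x (+) y}}.

Lemma parity_morph_three (c1 c2 c3 : gT -> bool) y x2 x3 :
  parity_morph c1 -> parity_morph c2 -> parity_morph c3 ->
  y \in G -> x2 \in G -> x3 \in G ->
  c1 y -> ~~ c2 y -> ~~ c3 y -> c2 x2 -> c3 x3 ->
  exists2 g, g \in G & [&& c1 g, c2 g & c3 g].
Proof.
move=> m1 m2 m3 yG x2G x3G c1y /negbTE c2y /negbTE c3y c2x2 c3x3.
(* Multiplying by y toggles c1 and nothing else. *)
have toggle x : x \in G -> exists2 x', x' \in G & [&& c1 x', c2 x' == c2 x & c3 x' == c3 x].
  move=> xG; have [c1x|/negbTE c1x] := boolP (c1 x); first by exists x; rewrite ?c1x ?eqxx.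
  exists (x * y)%g; first by rewrite groupM.
  by rewrite m1 ?m2 ?m3 // c1x c1y c2y c3y !addbF !eqxx.
have [a aG /and3P[c1a /eqP c2a /eqP c3a]] := toggle _ x2G.
have [b bG /and3P[c1b /eqP c2b /eqP c3b]] := toggle _ x3G.
have [c3a'|/negbTE c3a'] := boolP (c3 a); first by exists a; rewrite ?c1a ?c2a ?c2x2 ?c3a'.
have [c2b'|/negbTE c2b'] := boolP (c2 b); first by exists b; rewrite ?c1b ?c3b ?c3x3 ?c2b'.
exists (a * b * y)%g; first by rewrite !groupM.
by rewrite !(m1, m2, m3) ?groupM // c1a c1b c1y c2a c2x2 c2b' c2y c3a' c3b c3x3 c3y.
Qed.

Lemma parity_morph_trichotomy (c1 c2 c3 : gT -> bool) :
  parity_morph c1 -> parity_morph c2 -> parity_morph c3 ->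
  {in G, forall g, ~~ [&& c1 g, c2 g & c3 g]} ->
  [\/ {in G, forall g, ~~ c1 g}, {in G, forall g, ~~ c2 g}, {in G, forall g, ~~ c3 g}
    | {in G, forall g, ~~ (c1 g (+) c2 g (+) c3 g)}].
Proof.
move=> m1 m2 m3 none.
have [/forall_inP|/forall_inPn[x1 x1G /negPn c1x1]] := boolP [forall (g | g \in G), ~~ c1 g].
  by constructor 1.
have [/forall_inP|/forall_inPn[x2 x2G /negPn c2x2]] := boolP [forall (g | g \in G), ~~ c2 g].
  by constructor 2.
have [/forall_inP|/forall_inPn[x3 x3G /negPn c3x3]] := boolP [forall (g | g \in G), ~~ c3 g].
  by constructor 3.
have [/forall_inP|/forall_inPn[y yG /negPn cy]] :=
  boolP [forall (g | g \in G), ~~ (c1 g (+) c2 g (+) c3 g)].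
  by constructor 4.
exfalso; move: cy; case c1y: (c1 y); case c2y: (c2 y); case c3y: (c3 y) => //= _.
- by move: (none y yG); rewrite c1y c2y c3y.
- have [g gG] := parity_morph_three m1 m2 m3 yG x2G x3G c1y (negbT c2y) (negbT c3y) c2x2 c3x3.
  by apply/negP/none.
- have [g gG /and3P[c2g c1g c3g]] :=
    parity_morph_three m2 m1 m3 yG x1G x3G c2y (negbT c1y) (negbT c3y) c1x1 c3x3.
  by move: (none g gG); rewrite c1g c2g c3g.
- have [g gG /and3P[c3g c1g c2g]] :=
    parity_morph_three m3 m1 m2 yG x1G x2G c3y (negbT c1y) (negbT c2y) c1x1 c2x2.
  by move: (none g gG); rewrite c1g c2g c3g.
Qed.

Lemma parity_morph_cycle (c : gT -> bool) g :
  parity_morph c -> g \in G -> ~~ c g -> {in <[g]>%g, forall x, ~~ c x}.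
Proof.
move=> cM gG /negbTE cg _ /cycleP[k ->]; elim: k => [|k IHk].
  by have := cM 1%g 1%g (group1 G) (group1 G); rewrite mulg1 expg0; case: (c 1%g).
by rewrite expgSr cM ?groupX // cg addbF.
Qed.

End ParityMorphisms.

Section SignedPerm.
Variable n : nat.
Implicit Types (g h : {perm sym n}) (u v : 'I_n).

Definition signed g :=
  [forall x : sym n, g (x.1, ~~ x.2) == ((g x).1, ~~ (g x).2)].

Definition tau g u : 'I_n := (g (u, false)).1.
Definition sig g v : 'I_n := ((g^-1)%g (v, false)).1.

Lemma WD_signed g : g \in WD n -> signed g.
Proof. by rewrite inE => /andP[]. Qed.

Lemma signedE g : signed g -> forall u b, g (u, b) = (tau g u, b (+) (u \in Jset g)).
Proof.
move=> /forallP sg u [|]; rewrite /tau inE; last by case: (g (u, false)).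
by move: (sg (u, false)) => /= /eqP ->; case: (g (u, false)) => ? [].
Qed.

Lemma sigK g : signed g -> cancel (tau g) (sig g).
Proof.
move=> sg u; rewrite /sig /tau.
by have := signedE sg u (u \in Jset g); rewrite addbb => <-; rewrite permK.
Qed.

Lemma tauK g : signed g -> cancel (sig g) (tau g).
Proof.
move=> sg v; rewrite /sig; case E: ((g^-1)%g (v, false)) => [w b] /=.
have : g (w, b) = (v, false) by rewrite -E permKV.
by rewrite signedE // => -[].
Qed.

Lemma tau_inj g : signed g -> injective (tau g).
Proof. by move/sigK/can_inj. Qed.

Lemma eq_sig g u v : signed g -> (sig g v == u) = (v == tau g u).
Proof.
by move=> sg; apply/eqP/eqP => [<-|->]; rewrite ?tauK ?sigK.
Qed.

Lemma JsetM g h : signed g -> signed h -> forall u,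
  (u \in Jset (g * h)%g) = (u \in Jset g) (+) (tau g u \in Jset h).
Proof. by move=> sg sh u; rewrite {1}inE permM signedE // signedE. Qed.

End SignedPerm.

Section PicCoordinates.
Variable n : nat.
Implicit Types (g : {perm sym n}) (u v : 'I_n) (m : 'cV[int]_n.+2).
Local Open Scope ring_scope.

(* The vector a l_{-1} + b l_0 + sum_u (c u) l_{u+1}. *)
Definition pic_vec (a b : int) (c : 'I_n -> int) : 'cV[int]_n.+2 :=
  \col_i match unlift ord0 i with
         | None => a
         | Some i' => if unlift ord0 i' is Some u then c u else b
         end.

Lemma pic_vec_m1 a b c : pic_vec a b c (idx_m1 n) 0 = a.
Proof. by rewrite mxE unlift_none. Qed.

Lemma pic_vec_0 a b c : pic_vec a b c (idx_0 n) 0 = b.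
Proof. by rewrite mxE liftK unlift_none. Qed.

Lemma pic_vec_l a b c u : pic_vec a b c (idx_l u) 0 = c u.
Proof. by rewrite mxE !liftK. Qed.

Lemma idx_cases (P : 'I_n.+2 -> Prop) :
  P (idx_m1 n) -> P (idx_0 n) -> (forall u, P (idx_l u)) -> forall i, P i.
Proof.
move=> Pm1 P0 Pl i; case: (unliftP ord0 i) => [i' ->|->]; last exact: Pm1.
by case: (unliftP ord0 i') => [u ->|->]; [apply: Pl | apply: P0].
Qed.

Lemma eq_col_pic_vec m a b c :
  m (idx_m1 n) 0 = a -> m (idx_0 n) 0 = b -> (forall u, m (idx_l u) 0 = c u) ->
  m = pic_vec a b c.
Proof.
move=> Em1 E0 El; apply/matrixP => i j; rewrite (ord1 j).
by move: i; apply: idx_cases; rewrite ?pic_vec_m1 ?pic_vec_0 // => u; rewrite pic_vec_l.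
Qed.

Lemma eq_pic_vec a b c a' b' c' :
  a = a' -> b = b' -> c =1 c' -> pic_vec a b c = pic_vec a' b' c'.
Proof.
by move=> <- <- Ec; apply: eq_col_pic_vec => [||u]; rewrite ?pic_vec_m1 ?pic_vec_0 ?pic_vec_l.
Qed.

Lemma pic_vecD a b c a' b' c' :
  pic_vec a b c + pic_vec a' b' c' = pic_vec (a + a') (b + b') (fun u => c u + c' u).
Proof. by apply: eq_col_pic_vec => [||u]; rewrite mxE ?pic_vec_m1 ?pic_vec_0 ?pic_vec_l. Qed.

Lemma sum_idx_split (V : nmodType) (F : 'I_n.+2 -> V) :
  \sum_i F i = F (idx_m1 n) + F (idx_0 n) + \sum_u F (idx_l u).
Proof. by rewrite big_ord_recl big_ord_recl addrA. Qed.

Lemma sum_delta (P : pred 'I_n) u (F : 'I_n -> int) :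
  \sum_(i | P i) (u == i)%:R * F i = (P u)%:R * F u.
Proof.
rewrite big_mkcond (bigD1 u) //= eqxx mul1r big1 ?addr0 => [|i /negbTE ne].
  by case: (P u); rewrite ?mul1r ?mul0r.
by rewrite eq_sym ne mul0r if_same.
Qed.

Lemma idx_l_inj : injective (@idx_l n).
Proof. by move=> u v /lift_inj/lift_inj. Qed.

Lemma bvec_m1 : bvec (idx_m1 n) = pic_vec 1 0 (fun _ => 0).
Proof. by apply: eq_col_pic_vec => [||u]; rewrite mxE. Qed.

Lemma bvec_0 : bvec (idx_0 n) = pic_vec 0 1 (fun _ => 0).
Proof. by apply: eq_col_pic_vec => [||u]; rewrite mxE. Qed.

Lemma bvec_l u : bvec (idx_l u) = pic_vec 0 0 (fun w => (u == w)%:R).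
Proof. by apply: eq_col_pic_vec => [||w]; rewrite mxE // (inj_eq idx_l_inj) eq_sym. Qed.

Lemma pic_vecN a b c : - pic_vec a b c = pic_vec (- a) (- b) (fun u => - c u).
Proof. by apply: eq_col_pic_vec => [||u]; rewrite mxE ?pic_vec_m1 ?pic_vec_0 ?pic_vec_l. Qed.

Lemma pic_vecMn a b c k : pic_vec a b c *+ k = pic_vec (a *+ k) (b *+ k) (fun u => c u *+ k).
Proof. by apply: eq_col_pic_vec => [||u]; rewrite mulmxnE ?pic_vec_m1 ?pic_vec_0 ?pic_vec_l. Qed.

Lemma pic_vecZ x a b c : x *: pic_vec a b c = pic_vec (x * a) (x * b) (fun u => x * c u).
Proof. by apply: eq_col_pic_vec => [||u]; rewrite mxE ?pic_vec_m1 ?pic_vec_0 ?pic_vec_l. Qed.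

Lemma pic_vec_sum (P : pred 'I_n) a b c :
  \sum_(i | P i) pic_vec (a i) (b i) (c i) =
  pic_vec (\sum_(i | P i) a i) (\sum_(i | P i) b i) (fun u => \sum_(i | P i) c i u).
Proof.
apply: eq_col_pic_vec => [||u]; rewrite summxE; apply: eq_bigr => i _;
  by rewrite ?pic_vec_m1 ?pic_vec_0 ?pic_vec_l.
Qed.

Lemma Phi_img_m1 g : Phi_img g (idx_m1 n) =
  pic_vec 1 (#|Jset g| %/ 2)%:R (fun u => - (u \in Jset g)%:R).
Proof.
rewrite /Phi_img unlift_none bvec_m1 bvec_0 pic_vecMn.
under eq_bigr do rewrite bvec_l.
rewrite pic_vec_sum pic_vecN pic_vecD pic_vecD !big1_eq.
apply: eq_pic_vec => [||u]; rewrite ?subr0 ?addr0 ?mul0rn ?add0r //.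
under eq_bigr => i _ do rewrite -[(i == u)%:R]mulr1 eq_sym.
by rewrite (sum_delta _ _ (fun=> 1)) mulr1.
Qed.

Lemma Phi_img_0 g : Phi_img g (idx_0 n) = pic_vec 0 1 (fun _ => 0).
Proof. by rewrite /Phi_img liftK unlift_none bvec_0. Qed.

Lemma Phi_img_l g v : Phi_img g (idx_l v) =
  pic_vec 0 (sig g v \in Jset g)%:R
    (fun u => (-1) ^+ (u \in Jset g) * (sig g v == u)%:R).
Proof.
rewrite /Phi_img !liftK -/(sig g v) bvec_0 bvec_l.
case: ifP => vJ; [rewrite pic_vecN pic_vecD|]; apply: eq_pic_vec; rewrite ?subr0 // => u.
  by case: eqP => [<-|]; rewrite ?vJ ?mulr0 ?subr0 // expr1 mulN1r add0r.
by case: eqP => [<-|]; rewrite ?vJ ?mulr0 // expr0 mul1r.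
Qed.

Lemma Phi_mulmx_cols g m : Phi g *m m = \sum_c m c 0 *: Phi_img g c.
Proof.
apply/matrixP => i j; rewrite (ord1 j) !mxE summxE.
by apply: eq_bigr => c _; rewrite !mxE mulrC.
Qed.

Lemma mulmx_Phi g m : signed g ->
  Phi g *m m = pic_vec (m (idx_m1 n) 0)
    ((#|Jset g| %/ 2)%:R * m (idx_m1 n) 0 + m (idx_0 n) 0
       + \sum_(u in Jset g) m (idx_l (tau g u)) 0)
    (fun u => (-1) ^+ (u \in Jset g) * m (idx_l (tau g u)) 0
                - (u \in Jset g)%:R * m (idx_m1 n) 0).
Proof.
move=> sg; rewrite Phi_mulmx_cols sum_idx_split Phi_img_m1 Phi_img_0.
under eq_bigr do rewrite Phi_img_l pic_vecZ.
rewrite !pic_vecZ pic_vec_sum !pic_vecD; apply: eq_pic_vec => [||u].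
- by under eq_bigr => i _ do rewrite mulr0; rewrite big1_eq mulr1 mulr0 !addr0.
- rewrite (reindex_inj (tau_inj sg)) /= mulr1 mulrC [X in _ = _ + X]big_mkcond /=.
  congr (_ + _); apply: eq_bigr => w _; rewrite sigK //.
  by case: (w \in Jset g); rewrite ?mulr1 ?mulr0.
- under eq_bigr => i _ do rewrite eq_sig // eq_sym mulrC -mulrA.
  rewrite -mulr_sumr (sum_delta xpredT) mul1r mulr0 addr0 addrC mulrC mulrN.
  by rewrite [_ * (u \in Jset g)%:R]mulrC.
Qed.

End PicCoordinates.

Section JCocycle.
Variables (n : nat) (S : {set 'I_n}).
Implicit Types g h : {perm sym n}.

Lemma card_JsetM g h : signed g -> signed h -> {mono tau g : u / u \in S} ->
  #|S :&: Jset (g * h)%g| + 2 * \sum_(u in Jset g) (tau g u \in S :&: Jset h)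
  = #|S :&: Jset g| + #|S :&: Jset h|.
Proof.
move=> sg sh Smono; rewrite !card_sum_mem [X in _ = _ + X](reindex_inj (tau_inj sg)).
rewrite big_distrr [X in _ + X = _]big_mkcond -!big_split /=.
apply: eq_bigr => u _; rewrite !in_setI JsetM // Smono.
by case: (u \in S); case: (u \in Jset g); case: (tau g u \in Jset h).
Qed.

Lemma odd_JsetM g h : signed g -> signed h -> {mono tau g : u / u \in S} ->
  odd #|S :&: Jset (g * h)%g| = odd #|S :&: Jset g| (+) odd #|S :&: Jset h|.
Proof.
by move=> sg sh Smono; rewrite -oddD -(card_JsetM sg sh Smono) oddD oddM addbF.
Qed.

Local Open Scope ring_scope.

(* For S = [set: 'I_n] this is the coboundary Phi g l_{-1} - l_{-1}. *)
Definition Jcocycle g : 'cV[int]_n.+2 :=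
  pic_vec 0 (#|S :&: Jset g| %/ 2)%:R (fun u => - (u \in S :&: Jset g)%:R).

Lemma Jcocycle_crossed g h : signed g -> signed h -> {mono tau g : u / u \in S} ->
  ~~ odd #|S :&: Jset g| -> ~~ odd #|S :&: Jset h| ->
  Jcocycle (g * h)%g = Jcocycle g + Phi g *m Jcocycle h.
Proof.
move=> sg sh Smono evg evh; rewrite mulmx_Phi // pic_vec_m1 pic_vec_0 pic_vecD.
under eq_bigr => u _ do rewrite pic_vec_l.
apply: eq_pic_vec => [||u]; rewrite ?pic_vec_l ?addr0 //.
- rewrite mulr0 add0r sumrN -natr_sum.
  by move: evg evh (card_JsetM sg sh Smono); lia.
- rewrite mulr0 subr0 !in_setI JsetM // Smono.
  by case: (u \in S); case: (u \in Jset g); case: (tau g u \in Jset h);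
    rewrite ?expr1 ?expr0 ?mulN1r ?mul1r ?opprK ?oppr0 ?addr0 ?add0r ?subrr.
Qed.

End JCocycle.

Section Obstruction.
Variable n : nat.
Local Open Scope ring_scope.

Lemma card_setI_sum (T J : {set 'I_n}) :
  #|T :&: J|%:R = \sum_(v in T) (v \in J)%:R :> int.
Proof.
rewrite card_sum_mem natr_sum [RHS]big_mkcond.
by apply: eq_bigr => v _; rewrite in_setI; case: (v \in T).
Qed.

Lemma coboundary_parity (S T : {set 'I_n}) h (m : 'cV[int]_n.+2) (s : bool) :
  signed h -> Jcocycle S h = Phi h *m m - m -> {mono tau h : u / u \in T} ->
  {in T, forall u, (u \in S) = s} ->
  exists K : int, (m (idx_m1 n) 0 - s%:R) * #|T :&: Jset h|%:R = 2 * K.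
Proof.
move=> sh cob Tmono TS; set beta := m (idx_m1 n) 0.
pose mt v := m (idx_l (tau h v)) 0.
(* Modulo 2 the l_v-coordinates of the coboundary telescope along tau h on T. *)
have row v : v \in T -> (v \in Jset h)%:R * (beta - s%:R) =
    mt v - m (idx_l v) 0 - 2 * ((v \in Jset h)%:R * mt v).
  move=> vT; have := congr1 (fun M : 'cV[int]_n.+2 => M (idx_l v) 0) cob.
  rewrite /= /Jcocycle pic_vec_l mulmx_Phi // mxE pic_vec_l mxE in_setI (TS v vT).
  rewrite -/beta -/(mt v).
  by case: (v \in Jset h); case: (s); rewrite /= ?expr1 ?expr0; lia.
exists (- \sum_(v in T) (v \in Jset h)%:R * mt v).
rewrite card_setI_sum mulrC mulr_suml (eq_bigr _ row) !sumrB -mulr_sumr.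
have -> : \sum_(v in T) mt v = \sum_(v in T) m (idx_l v) 0.
  by rewrite [RHS](reindex_inj (tau_inj sh)); apply: eq_bigl => v; rewrite /= Tmono.
by rewrite subrr sub0r mulrN.
Qed.

Lemma not_H1_trivial_of_parity (H : {group {perm sym n}}) (S T1 T2 : {set 'I_n}) h1 h2 :
  H \subset WD n ->
  {in H, forall h, {mono tau h : u / u \in S}} ->
  {in H, forall h, ~~ odd #|S :&: Jset h|} ->
  h1 \in H -> {mono tau h1 : u / u \in T1} -> T1 \subset S -> odd #|T1 :&: Jset h1| ->
  h2 \in H -> {mono tau h2 : u / u \in T2} -> [disjoint T2 & S] -> odd #|T2 :&: Jset h2| ->
  ~ H1_trivial H.
Proof.
move=> sHW Smono Seven h1H T1mono sT1S odd1 h2H T2mono T2S odd2 H1H.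
have sgn h : h \in H -> signed h by move/(subsetP sHW)/WD_signed.
have [m cob] : exists m, {in H, forall h, Jcocycle S h = Phi h *m m - m}.
  apply: H1H => g h gH hH.
  by apply: Jcocycle_crossed; [apply: sgn..|apply: Smono|apply: Seven|apply: Seven].
have [K1 E1] := coboundary_parity (s := true) (sgn _ h1H) (cob _ h1H) T1mono
  (fun u uT1 => subsetP sT1S u uT1).
have [K2 E2] := coboundary_parity (s := false) (sgn _ h2H) (cob _ h2H) T2mono
  (fun u uT2 => disjointFr T2S uT2).
move: E1 E2 odd1 odd2; rewrite !natz; lia.
Qed.

End Obstruction.

Section Orbits.
Variables (n : nat) (G : {group {perm sym n}}).
Hypotheses (sGW : G \subset WD n) (Gmin : cond_min G).
Implicit Types (g h : {perm sym n}) (u v w : 'I_n) (S : {set 'I_n}).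

Definition G_stable S := {in G, forall g, {mono tau g : v / v \in S}}.

Definition orbit_fibers u : {set 'I_n} :=
  [set v | orbit 'P G (v, false) == orbit 'P G (u, false)].

Lemma signed_G g : g \in G -> signed g.
Proof. by move/(subsetP sGW)/WD_signed. Qed.

Lemma orbit_sign v b : orbit 'P G (v, b) = orbit 'P G (v, false).
Proof. by case: b => //; apply/orbit_eqP/Gmin. Qed.

Lemma orbits_of_fibers :
  orbit 'P G @: [set: sym n] = [set orbit 'P G (u, false) | u : 'I_n].
Proof.
apply/setP => O; apply/imsetP/imsetP => [[[u b] _ ->]|[u _ ->]].
  by exists u; rewrite ?orbit_sign.
by exists (u, false).
Qed.

Lemma orbit_tau g v : g \in G -> orbit 'P G (tau g v, false) = orbit 'P G (v, false).
Proof.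
move=> gG; rewrite -(orbit_sign _ (v \in Jset g)) -(orbit_act 'P (v, false) gG) /=.
by rewrite /aperm signedE ?signed_G.
Qed.

Lemma orbit_fibers_stable u : G_stable (orbit_fibers u).
Proof. by move=> g gG v; rewrite !inE orbit_tau. Qed.

Lemma G_stableU S1 S2 : G_stable S1 -> G_stable S2 -> G_stable (S1 :|: S2).
Proof. by move=> st1 st2 g gG v; rewrite !in_setU st1 ?st2. Qed.

Lemma orbit_fibers_id u : u \in orbit_fibers u.
Proof. by rewrite inE. Qed.

Lemma orbit_fibers_disjoint u w :
  orbit 'P G (u, false) != orbit 'P G (w, false) -> [disjoint orbit_fibers u & orbit_fibers w].
Proof.
move=> neq; rewrite -setI_eq0; apply/eqP/setP => v; rewrite !inE.
by apply/negbTE/negP => /andP[/eqP vu /eqP vw]; move: neq; rewrite -vu -vw eqxx.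
Qed.

Lemma notin_orbit_fibers u w :
  orbit 'P G (u, false) != orbit 'P G (w, false) -> w \notin orbit_fibers u.
Proof. by rewrite inE eq_sym. Qed.

Lemma parity_morph_Jset S : G_stable S -> parity_morph G (fun g => odd #|S :&: Jset g|).
Proof.
by move=> st g h gG hG /=; apply: odd_JsetM; [apply: signed_G..|apply: st].
Qed.

Lemma fiber_flip u :
  exists2 h, h \in G & {mono tau h : v / v \in [set u]} /\ odd #|[set u] :&: Jset h|.
Proof.
have /orbitP[h hG /= hu] := Gmin u; rewrite /aperm in hu.
have [tu uJ] : tau h u = u /\ u \in Jset h by rewrite /tau inE hu.
exists h => //; split; first by move=> v; rewrite !inE -{1}tu (inj_eq (tau_inj (signed_G hG))).
by rewrite (setIidPl _) ?cards1 ?sub1set.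
Qed.

Lemma not_H1_of_even_stable S u w : G_stable S ->
  {in G, forall g, ~~ odd #|S :&: Jset g|} -> u \in S -> w \notin S -> ~ H1_trivial G.
Proof.
move=> st ev uS wS.
have [h1 h1G [mono1 odd1]] := fiber_flip u.
have [h2 h2G [mono2 odd2]] := fiber_flip w.
by apply: (not_H1_trivial_of_parity sGW st ev h1G mono1 _ odd1 h2G mono2 _ odd2);
  rewrite ?sub1set ?disjoints1.
Qed.

Lemma not_H1_of_odd_orbits u1 u2 u3 g :
  orbit 'P G (u1, false) != orbit 'P G (u2, false) ->
  orbit 'P G (u1, false) != orbit 'P G (u3, false) ->
  orbit 'P G (u2, false) != orbit 'P G (u3, false) ->
  g \in G -> odd #|orbit_fibers u1 :&: Jset g| -> odd #|orbit_fibers u2 :&: Jset g| ->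
  odd #|orbit_fibers u3 :&: Jset g| -> ~ H1_trivial <[g]>%G.
Proof.
move=> n12 n13 n23 gG odd1 odd2 odd3.
have sCG : <[g]>%g \subset G by rewrite cycle_subG.
have st12 := G_stableU (orbit_fibers_stable u1) (orbit_fibers_stable u2).
have ev12 : {in <[g]>%g, forall h, ~~ odd #|(orbit_fibers u1 :|: orbit_fibers u2) :&: Jset h|}.
  apply: parity_morph_cycle (parity_morph_Jset st12) gG _.
  by rewrite odd_setIU ?orbit_fibers_disjoint // odd1 odd2.
have d3 : [disjoint orbit_fibers u3 & orbit_fibers u1 :|: orbit_fibers u2].
  by rewrite disjoint_sym disjointsU !orbit_fibers_disjoint.
apply: (not_H1_trivial_of_parity (subset_trans sCG sGW) _ ev12 (cycle_id g)
  (orbit_fibers_stable u1 gG) (subsetUl _ _) odd1 (cycle_id g)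
  (orbit_fibers_stable u3 gG) d3 odd3).
by move=> h /(subsetP sCG); apply: st12.
Qed.

Lemma not_cond_H1_of_four_orbits u1 u2 u3 u4 :
  uniq [seq orbit 'P G (u, false) | u <- [:: u1; u2; u3; u4]] -> ~ cond_H1 G.
Proof.
rewrite /= !inE !negb_or => /and4P[/and3P[n12 n13 n14] /andP[n23 n24] n34 _] H1.
pose chi u g := odd #|orbit_fibers u :&: Jset g|.
have chiM u : parity_morph G (chi u) := parity_morph_Jset (orbit_fibers_stable u).
have [/exists_inP[g gG /and3P[]]|/exists_inPn none] :=
  boolP [exists (g | g \in G), [&& chi u1 g, chi u2 g & chi u3 g]].
  by move=> odd1 odd2 odd3; apply: (not_H1_of_odd_orbits n12 n13 n23 gG odd1 odd2 odd3);
    apply: H1; rewrite cycle_subG.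
suff : ~ H1_trivial G by apply; apply: H1.
have [ev|ev|ev|ev] := parity_morph_trichotomy (chiM u1) (chiM u2) (chiM u3) none.
- exact: (not_H1_of_even_stable (orbit_fibers_stable u1) ev (orbit_fibers_id u1)
    (notin_orbit_fibers n12)).
- by apply: (not_H1_of_even_stable (orbit_fibers_stable u2) ev (orbit_fibers_id u2)
    (notin_orbit_fibers (w := u1) _)); rewrite eq_sym.
- by apply: (not_H1_of_even_stable (orbit_fibers_stable u3) ev (orbit_fibers_id u3)
    (notin_orbit_fibers (w := u1) _)); rewrite eq_sym.
- have st123 : G_stable (orbit_fibers u1 :|: orbit_fibers u2 :|: orbit_fibers u3).
    by do !apply: G_stableU; apply: orbit_fibers_stable.
  apply: (not_H1_of_even_stable st123 (u := u1) (w := u4)) => [g gG||].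
  + rewrite odd_setIU ?odd_setIU ?orbit_fibers_disjoint //; first exact: ev.
    by rewrite disjointsU !orbit_fibers_disjoint.
  + by rewrite !in_setU orbit_fibers_id.
  + by rewrite !in_setU !negb_or !notin_orbit_fibers.
Qed.

End Orbits.

Theorem theorem4p3 (n : nat) (G : {group {perm sym n}}) :
  G \subset WD n -> cond_H1 G -> cond_min G ->
  #|orbit 'P G @: [set: sym n]| <= 3.
Proof.
move=> sGW H1 Gmin; rewrite leqNgt (orbits_of_fibers Gmin); apply/negP.
by case/card_imset_gt3 => [u1 [u2 [u3 [u4 uniq_orbits]]]];
  apply: (not_cond_H1_of_four_orbits sGW Gmin uniq_orbits).
Qed.
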